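(* Let $X\in\mathbb{R}^{n\times p}$, $y\in\mathbb{R}^n$, $\lambda>0$, $\alpha>0$, $G=X^\top X+\alpha I_p$, $\tilde y=X^\top y$. Define $F:\mathbb{R}^{2p}\to\mathbb{R}^{2p}$ for $z=(\beta,d)\in\mathbb{R}^p\times\mathbb{R}^p$ by $$F(z)=\begin{pmatrix}\beta-T_\lambda(\beta+d)\\ G\beta+nd-\tilde y\end{pmatrix}.$$ For $w=(\beta,d)$ let $A(w)=\{i:|\beta_i+d_i|\ge\lambda\}$, let $D_w=\operatorname{diag}(\mathbf 1_{\{i\in A(w)\}})_{i=1}^p$, and define the $2p\times2p$ matrix (in $(\beta,d)$-block coordinates) $$H(w)=\begin{pmatrix} I_p-D_w & -D_w\\ G & nI_p\end{pmatrix}.$$ Then $F$ is Newton differentiable at every $z\in\mathbb{R}^{2p}$ with $H(w)$ as a Newton derivative, i.e. $\|F(z+h)-F(z)-H(z+h)h\|_2=o(\|h\|_2)$ as $h\to0$. Furthermore, for every $w$, $H(w)$ is invertible and $$\|H(w)^{-1}\|\le 1+\frac{2\,(n+1+\alpha+\|X\|^2)^2}{\alpha},$$ where $\|\cdot\|$ is the spectral (operator $2$-) norm.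
   Context: $T_\lambda$ is the componentwise soft-threshold operator $T_\lambda(x)_i=\operatorname{sgn}(x_i)\max(|x_i|-\lambda,0)$. Newton differentiability of $F:\mathbb{R}^m\to\mathbb{R}^l$ at $x$: there exist an open neighborhood $N(x)$ and a family $D:N(x)\to\mathbb{R}^{l\times m}$ with $\|F(x+h)-F(x)-D(x+h)h\|_2=o(\|h\|_2)$. (In the coordinate ordering $(d_A,\beta_B,\beta_A,d_B)$ with $A=A(w)$, $B$ its complement, $H(w)$ is the block matrix with rows $[-I_{AA},0,0,0]$, $[0,I_{BB},0,0]$, $[nI_{AA},X_A^\top X_B,G_{AA},0]$, $[0,G_{BB},X_B^\top X_A,nI_{BB}]$.) *)

(* Vectors in R^k are functions nat -> R of
   which only the entries 0..k-1 are relevant; matrices are nat -> nat -> R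
   of which only the entries (i,j) with i < rows, j < cols are relevant.    *)
From Stdlib Require Import Reals Lra Lia ClassicalEpsilon.
Open Scope R_scope.

Definition vec := nat -> R.
Definition mat := nat -> nat -> R.

Fixpoint rsum (k : nat) (f : nat -> R) : R :=
  match k with
  | O => 0
  | S k' => rsum k' f + f k'
  end.

Definition vadd (x y : vec) : vec := fun i => x i + y i.
Definition vsub (x y : vec) : vec := fun i => x i - y i.

Definition mv (cols : nat) (A : mat) (x : vec) : vec :=
  fun i => rsum cols (fun j => A i j * x j).

Definition mm (k : nat) (A B : mat) : mat :=
  fun i l => rsum k (fun j => A i j * B j l).

Definition idm : mat := fun i j => if Nat.eqb i j then 1 else 0.

Definition norm2 (k : nat) (x : vec) : R := sqrt (rsum k (fun i => x i ^ 2)).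

(* Spectral (operator 2-) norm of a rows x cols matrix:
   sup { ||A x||_2 : ||x||_2 <= 1 }  (the sup exists; chosen by epsilon). *)
Definition opnorm (rows cols : nat) (A : mat) : R :=
  epsilon (inhabits 0)
    (is_lub (fun r => exists x : vec, norm2 cols x <= 1 /\ r = norm2 rows (mv cols A x))).

Definition is_inverse (k : nat) (A B : mat) : Prop :=
  forall i j, (i < k)%nat -> (j < k)%nat ->
    mm k A B i j = idm i j /\ mm k B A i j = idm i j.

Definition sgn (x : R) : R :=
  if Rlt_dec 0 x then 1 else if Rlt_dec x 0 then -1 else 0.
Definition soft (lam x : R) : R := sgn x * Rmax (Rabs x - lam) 0.

(* Newton differentiability of F : R^m -> R^l at x with Newton derivative D
   (D defined on all of R^m, so the neighbourhood N(x) is R^m):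
   ||F(x+h) - F(x) - D(x+h) h||_2 = o(||h||_2) as h -> 0. *)
Definition newton_diff (m l : nat) (F : vec -> vec) (D : vec -> mat) (x : vec) : Prop :=
  forall eps, eps > 0 -> exists delta, delta > 0 /\
    forall h : vec, norm2 m h < delta ->
      norm2 l (vsub (vsub (F (vadd x h)) (F x)) (mv m (D (vadd x h)) h))
        <= eps * norm2 m h.

(* Problem data: X is n x p, y in R^n. *)
Definition Gm (n : nat) (X : mat) (alpha : R) : mat :=
  fun i j => rsum n (fun k => X k i * X k j) + alpha * idm i j.
Definition ytil (n : nat) (X : mat) (y : vec) : vec :=
  fun j => rsum n (fun k => X k j * y k).

(* z in R^{2p} encodes (beta, d): beta_i = z i, d_i = z (p + i)%nat, i < p. *)
Definition Fmap (n p : nat) (X : mat) (y : vec) (lam alpha : R) (z : vec) : vec :=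
  fun i =>
    if Nat.ltb i p then z i - soft lam (z i + z (p + i)%nat)
    else let j := (i - p)%nat in
      mv p (Gm n X alpha) z j + INR n * z (p + j)%nat - ytil n X y j.

Definition actv (p : nat) (lam : R) (w : vec) (i : nat) : R :=
  if Rle_dec lam (Rabs (w i + w (p + i)%nat)) then 1 else 0.

Definition Hmat (n p : nat) (X : mat) (lam alpha : R) (w : vec) : mat :=
  fun i j =>
    if Nat.ltb i p then
      (if Nat.ltb j p then idm i j * (1 - actv p lam w i)
       else - (idm i (j - p)%nat * actv p lam w i))
    else
      (if Nat.ltb j p then Gm n X alpha (i - p)%nat j
       else INR n * idm (i - p)%nat (j - p)%nat).

(* Newton differentiability holds in the strongest possible sense: for v close
   enough to u, soft lam v - soft lam u equals (v - u) times the slope of the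
   soft threshold at v (1 if |v| >= lam, else 0), so for small h the residual
   F(z+h) - F(z) - H(z+h) h vanishes identically.

   For the inverse, write v = (beta, d) and split along the active set:
   q = D beta, e = (I - D) beta, f = D d, g = (I - D) d.  The first block row
   of H v is e - f, which controls e and f; testing the second block row
   G beta + n d against q and using <q, G q> >= alpha |q|^2 controls q; and on
   the inactive set the second row reads n g = (G beta + n d) - G beta, which
   controls g.  This gives |v| <= C |H v|, hence invertibility with
   |H^-1| <= C. *)
From Stdlib Require Import Reals Lra Lia ClassicalEpsilon.
Open Scope R_scope.

Lemma rsum_ext k f g : (forall i, (i < k)%nat -> f i = g i) -> rsum k f = rsum k g.
Proof.
  induction k as [|k IH]; intros H; simpl; auto.
  rewrite IH by (intros; apply H; lia). rewrite H by lia. reflexivity.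
Qed.

Lemma rsum_plus k f g : rsum k (fun i => f i + g i) = rsum k f + rsum k g.
Proof. induction k; simpl; [lra | rewrite IHk; lra]. Qed.

Lemma rsum_minus k f g : rsum k (fun i => f i - g i) = rsum k f - rsum k g.
Proof. induction k; simpl; [lra | rewrite IHk; lra]. Qed.

Lemma rsum_scal k c f : rsum k (fun i => c * f i) = c * rsum k f.
Proof. induction k; simpl; [lra | rewrite IHk; lra]. Qed.

Lemma rsum_zero k f : (forall i, (i < k)%nat -> f i = 0) -> rsum k f = 0.
Proof.
  intros H. rewrite (rsum_ext k f (fun _ => 0)) by auto.
  clear H; induction k; simpl; [lra | rewrite IHk; lra].
Qed.

Lemma rsum_le k f g : (forall i, (i < k)%nat -> f i <= g i) -> rsum k f <= rsum k g.
Proof.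
  induction k as [|k IH]; intros H; simpl; [lra|].
  assert (rsum k f <= rsum k g) by (apply IH; intros; apply H; lia).
  assert (f k <= g k) by (apply H; lia). lra.
Qed.

Lemma rsum_nonneg k f : (forall i, (i < k)%nat -> 0 <= f i) -> 0 <= rsum k f.
Proof.
  intros H. replace 0 with (rsum k (fun _ => 0)) by (apply rsum_zero; auto).
  apply rsum_le; auto.
Qed.

Lemma rsum_term_le k f i :
  (forall j, (j < k)%nat -> 0 <= f j) -> (i < k)%nat -> f i <= rsum k f.
Proof.
  induction k as [|k IH]; intros H Hi; [lia|]. simpl.
  destruct (Nat.eq_dec i k) as [->|Hne].
  - assert (0 <= rsum k f) by (apply rsum_nonneg; intros; apply H; lia). lra.
  - assert (f i <= rsum k f) by (apply IH; [intros; apply H|]; lia).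
    assert (0 <= f k) by (apply H; lia). lra.
Qed.

Lemma rsum_add_range a b f :
  rsum (a + b) f = rsum a f + rsum b (fun i => f (a + i)%nat).
Proof.
  induction b as [|b IH]; simpl.
  - rewrite Nat.add_0_r. lra.
  - rewrite Nat.add_succ_r. simpl. rewrite IH. lra.
Qed.

Lemma rsum_swap m k (f : nat -> nat -> R) :
  rsum m (fun i => rsum k (fun j => f i j)) = rsum k (fun j => rsum m (fun i => f i j)).
Proof.
  induction m as [|m IH]; simpl.
  - symmetry; apply rsum_zero; auto.
  - rewrite IH, <- rsum_plus. reflexivity.
Qed.

Lemma rsum_idm k i c : (i < k)%nat -> rsum k (fun j => idm i j * c j) = c i.
Proof.
  induction k as [|k IH]; intros Hi; [lia|]. simpl.
  destruct (Nat.eq_dec i k) as [->|Hne].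
  - rewrite rsum_zero.
    + unfold idm; rewrite Nat.eqb_refl; lra.
    + intros j Hj. unfold idm. destruct (Nat.eqb_spec k j); [lia|lra].
  - rewrite IH by lia. unfold idm. destruct (Nat.eqb_spec i k); [lia|lra].
Qed.

Lemma exists_pos_lower_bound k (f : nat -> R) :
  (forall i, 0 < f i) -> exists m, 0 < m /\ forall i, (i < k)%nat -> m <= f i.
Proof.
  intros Hf. induction k as [|k [m [Hm Hle]]].
  - exists 1. split; [lra | intros; lia].
  - exists (Rmin m (f k)). split; [apply Rmin_glb_lt; auto|].
    intros i Hi. destruct (Nat.eq_dec i k) as [->|Hne]; [apply Rmin_r|].
    eapply Rle_trans; [apply Rmin_l | apply Hle; lia].
Qed.

Definition nsq k (x : vec) : R := rsum k (fun i => x i ^ 2).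
Definition dot k (x y : vec) : R := rsum k (fun i => x i * y i).

Lemma nsq_nonneg k x : 0 <= nsq k x.
Proof. apply rsum_nonneg; intros; apply pow2_ge_0. Qed.

Lemma nsq_ext k x y : (forall i, (i < k)%nat -> x i = y i) -> nsq k x = nsq k y.
Proof. intros H; apply rsum_ext; intros; rewrite H; auto. Qed.

Lemma nsq_eq0 k x : nsq k x = 0 -> forall i, (i < k)%nat -> x i = 0.
Proof.
  intros H i Hi.
  assert (x i ^ 2 <= nsq k x).
  { apply (rsum_term_le k (fun i => x i ^ 2)); auto. intros; apply pow2_ge_0. }
  pose proof (pow2_ge_0 (x i)). nra.
Qed.

Lemma nsq_plus k x y :
  nsq k (fun i => x i + y i) = nsq k x + 2 * dot k x y + nsq k y.
Proof.
  unfold nsq, dot.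
  rewrite (rsum_ext k _ (fun i => x i ^ 2 + (2 * (x i * y i) + y i ^ 2))) by (intros; ring).
  rewrite rsum_plus, rsum_plus, rsum_scal. ring.
Qed.

Lemma nsq_double p x : nsq (2 * p) x = nsq p x + nsq p (fun i => x (p + i)%nat).
Proof. unfold nsq. replace (2 * p)%nat with (p + p)%nat by lia. apply rsum_add_range. Qed.

Lemma norm2_nonneg k x : 0 <= norm2 k x.
Proof. apply sqrt_pos. Qed.

Lemma norm2_sqr k x : norm2 k x * norm2 k x = nsq k x.
Proof. apply sqrt_sqrt, nsq_nonneg. Qed.

Lemma norm2_ext k x y : (forall i, (i < k)%nat -> x i = y i) -> norm2 k x = norm2 k y.
Proof. intros H; unfold norm2; f_equal; apply (nsq_ext k x y H). Qed.

Lemma norm2_eq0 k x : norm2 k x = 0 -> forall i, (i < k)%nat -> x i = 0.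
Proof. intros H. apply nsq_eq0, sqrt_eq_0; [apply nsq_nonneg | exact H]. Qed.

Lemma norm2_vec0 k x : (forall i, (i < k)%nat -> x i = 0) -> norm2 k x = 0.
Proof.
  intros H. unfold norm2. rewrite rsum_zero; [apply sqrt_0|].
  intros i Hi. rewrite H by auto. ring.
Qed.

Lemma sqrt_le_sqr a b : 0 <= b -> a <= b * b -> sqrt a <= b.
Proof.
  intros Hb H. destruct (Rle_or_lt a 0).
  - rewrite sqrt_neg_0 by auto; auto.
  - rewrite <- (sqrt_square b) by auto. apply sqrt_le_1_alt. lra.
Qed.

Lemma cauchy_schwarz_sqr k x y : dot k x y ^ 2 <= nsq k x * nsq k y.
Proof.
  destruct (Req_dec (nsq k y) 0) as [H0|H0].
  - assert (dot k x y = 0).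
    { apply rsum_zero. intros i Hi. rewrite (nsq_eq0 k y H0 i Hi). ring. }
    rewrite H, H0. lra.
  - assert (Hy : 0 < nsq k y) by (pose proof (nsq_nonneg k y); lra).
    (* expand 0 <= |x - t y|^2 at the minimiser t = <x,y> / |y|^2 *)
    set (t := dot k x y / nsq k y).
    pose proof (nsq_nonneg k (fun i => x i + (- t) * y i)) as Hnn.
    rewrite nsq_plus in Hnn.
    assert (E1 : dot k x (fun i => - t * y i) = - t * dot k x y).
    { unfold dot. rewrite <- rsum_scal. apply rsum_ext; intros; ring. }
    assert (E2 : nsq k (fun i => - t * y i) = t ^ 2 * nsq k y).
    { unfold nsq. rewrite <- rsum_scal. apply rsum_ext; intros; ring. }
    rewrite E1, E2 in Hnn. unfold t in Hnn.
    replace (nsq k x + 2 * (- (dot k x y / nsq k y) * dot k x y)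
             + (dot k x y / nsq k y) ^ 2 * nsq k y)
      with ((nsq k x * nsq k y - dot k x y ^ 2) / nsq k y) in Hnn by (field; lra).
    assert (0 <= nsq k x * nsq k y - dot k x y ^ 2); [|lra].
    apply (Rmult_le_compat_r (nsq k y)) in Hnn; [|lra].
    unfold Rdiv in Hnn. rewrite Rmult_0_l, Rmult_assoc, Rinv_l in Hnn; lra.
Qed.

Lemma cauchy_schwarz k x y : Rabs (dot k x y) <= norm2 k x * norm2 k y.
Proof.
  rewrite <- sqrt_Rsqr_abs. unfold norm2. rewrite <- sqrt_mult by apply nsq_nonneg.
  apply sqrt_le_1_alt. pose proof (cauchy_schwarz_sqr k x y).
  unfold Rsqr. fold (nsq k x) (nsq k y). nra.
Qed.

Lemma norm2_add_le k x y : norm2 k (fun i => x i + y i) <= norm2 k x + norm2 k y.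
Proof.
  apply sqrt_le_sqr.
  - pose proof (norm2_nonneg k x); pose proof (norm2_nonneg k y); lra.
  - fold (nsq k (fun i => x i + y i)). rewrite nsq_plus.
    pose proof (cauchy_schwarz k x y). pose proof (Rle_abs (dot k x y)).
    rewrite <- (norm2_sqr k x), <- (norm2_sqr k y). nra.
Qed.

Lemma norm2_scal k c x : norm2 k (fun i => c * x i) = Rabs c * norm2 k x.
Proof.
  unfold norm2. rewrite (rsum_ext k _ (fun i => c ^ 2 * x i ^ 2)) by (intros; ring).
  rewrite rsum_scal, sqrt_mult by (apply pow2_ge_0 || apply nsq_nonneg).
  f_equal. rewrite <- sqrt_Rsqr_abs. unfold Rsqr. f_equal. ring.
Qed.

Lemma norm2_sub_le k x y : norm2 k (fun i => x i - y i) <= norm2 k x + norm2 k y.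
Proof.
  rewrite (norm2_ext k _ (fun i => x i + -1 * y i)) by (intros; ring).
  eapply Rle_trans; [apply norm2_add_le|].
  rewrite norm2_scal, Rabs_left by lra. lra.
Qed.

Lemma norm2_le_pointwise k x y :
  (forall i, (i < k)%nat -> x i ^ 2 <= y i ^ 2) -> norm2 k x <= norm2 k y.
Proof. intros H. apply sqrt_le_1_alt, rsum_le, H. Qed.

Lemma abs_coord_le_norm2 k x i : (i < k)%nat -> Rabs (x i) <= norm2 k x.
Proof.
  intros Hi. rewrite <- sqrt_Rsqr_abs. apply sqrt_le_1_alt.
  unfold Rsqr. replace (x i * x i) with (x i ^ 2) by ring.
  apply (rsum_term_le k (fun i => x i ^ 2)); auto. intros; apply pow2_ge_0.
Qed.

Lemma mv_vadd cols A x y i : mv cols A (vadd x y) i = mv cols A x i + mv cols A y i.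
Proof. unfold mv. rewrite <- rsum_plus. apply rsum_ext. intros; unfold vadd; ring. Qed.

Lemma mv_scal cols A c x i : mv cols A (fun j => c * x j) i = c * mv cols A x i.
Proof. unfold mv. rewrite <- rsum_scal. apply rsum_ext; intros; ring. Qed.

Lemma mv_mm k A B x i : mv k A (mv k B x) i = mv k (mm k A B) x i.
Proof.
  unfold mv, mm.
  rewrite (rsum_ext k _ (fun j => rsum k (fun l => A i j * B j l * x l)))
    by (intros; rewrite <- rsum_scal; apply rsum_ext; intros; ring).
  rewrite rsum_swap. apply rsum_ext. intros l _.
  rewrite Rmult_comm, <- rsum_scal. apply rsum_ext; intros; ring.
Qed.

Lemma mv_bounded rows cols A :
  exists C, forall x, norm2 cols x <= 1 -> norm2 rows (mv cols A x) <= C.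
Proof.
  (* the Frobenius norm is a bound *)
  exists (sqrt (rsum rows (fun k => nsq cols (A k)))). intros x Hx.
  apply sqrt_le_1_alt.
  assert (Hx1 : nsq cols x <= 1).
  { rewrite <- norm2_sqr. pose proof (norm2_nonneg cols x). nra. }
  apply rsum_le. intros k _.
  pose proof (cauchy_schwarz_sqr cols (A k) x). pose proof (nsq_nonneg cols (A k)).
  unfold dot in *. unfold mv. nra.
Qed.

Lemma opnorm_is_lub rows cols A :
  is_lub (fun r => exists x : vec, norm2 cols x <= 1 /\ r = norm2 rows (mv cols A x))
         (opnorm rows cols A).
Proof.
  unfold opnorm. apply epsilon_spec.
  destruct (completeness
    (fun r => exists x : vec, norm2 cols x <= 1 /\ r = norm2 rows (mv cols A x))) as [m Hm].
  - destruct (mv_bounded rows cols A) as [C HC].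
    exists C. intros r [x [Hx ->]]. auto.
  - exists (norm2 rows (mv cols A (fun _ => 0))). exists (fun _ => 0). split; auto.
    rewrite norm2_vec0 by auto. lra.
  - exists m; exact Hm.
Qed.

Lemma opnorm_le rows cols A C :
  (forall x, norm2 cols x <= 1 -> norm2 rows (mv cols A x) <= C) -> opnorm rows cols A <= C.
Proof.
  intros H. apply (opnorm_is_lub rows cols A). intros r [x [Hx ->]]. auto.
Qed.

Lemma norm2_mv_le rows cols A x :
  norm2 rows (mv cols A x) <= opnorm rows cols A * norm2 cols x.
Proof.
  destruct (opnorm_is_lub rows cols A) as [Hub _].
  destruct (Req_dec (norm2 cols x) 0) as [Hz|Hz].
  - rewrite Hz, norm2_vec0; [lra|]. intros i _. unfold mv.
    apply rsum_zero. intros j Hj. rewrite (norm2_eq0 cols x Hz j Hj). ring.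
  - assert (Hp : 0 < norm2 cols x) by (pose proof (norm2_nonneg cols x); lra).
    set (c := / norm2 cols x).
    assert (Hc : 0 < c) by (apply Rinv_0_lt_compat; auto).
    assert (Hin : norm2 rows (mv cols A (fun j => c * x j)) <= opnorm rows cols A).
    { apply Hub. exists (fun j => c * x j). split; auto.
      rewrite norm2_scal, Rabs_right by lra. unfold c. rewrite Rinv_l; lra. }
    rewrite (norm2_ext rows _ (fun i => c * mv cols A x i)) in Hin by (intros; apply mv_scal).
    rewrite norm2_scal, Rabs_right in Hin by lra.
    apply (Rmult_le_compat_r (norm2 cols x)) in Hin; [|lra].
    unfold c in Hin. rewrite Rmult_comm, <- Rmult_assoc, Rinv_r, Rmult_1_l in Hin by lra.
    exact Hin.
Qed.

Lemma dot_ytil n p X x y : dot p x (ytil n X y) = dot n (mv p X x) y.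
Proof.
  unfold dot, ytil, mv.
  rewrite (rsum_ext p _ (fun i => rsum n (fun k => x i * X k i * y k)))
    by (intros; rewrite <- rsum_scal; apply rsum_ext; intros; ring).
  rewrite rsum_swap. apply rsum_ext. intros k _.
  rewrite Rmult_comm, <- rsum_scal. apply rsum_ext; intros; ring.
Qed.

Lemma opnorm_nonneg rows cols A : 0 <= opnorm rows cols A.
Proof.
  apply (opnorm_is_lub rows cols A). exists (fun _ => 0). split.
  - rewrite norm2_vec0 by auto. lra.
  - symmetry. apply norm2_vec0. intros i _. apply rsum_zero. intros; ring.
Qed.

Lemma norm2_ytil_le n p X y : norm2 p (ytil n X y) <= opnorm n p X * norm2 n y.
Proof.
  set (u := ytil n X y).
  assert (E : norm2 p u * norm2 p u <= norm2 p u * (opnorm n p X * norm2 n y)).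
  { rewrite norm2_sqr. replace (nsq p u) with (dot p u u) by (apply rsum_ext; intros; ring).
    unfold u at 2. rewrite dot_ytil.
    eapply Rle_trans; [apply Rle_abs|]. eapply Rle_trans; [apply cauchy_schwarz|].
    pose proof (norm2_mv_le n p X u). pose proof (norm2_nonneg n y). nra. }
  pose proof (norm2_nonneg p u).
  destruct (Req_dec (norm2 p u) 0) as [Hz|Hz].
  - rewrite Hz. pose proof (norm2_nonneg n y). pose proof (opnorm_nonneg n p X). nra.
  - apply (Rmult_le_reg_l (norm2 p u)); lra.
Qed.

Lemma Gm_mv n p X alpha x i : (i < p)%nat ->
  mv p (Gm n X alpha) x i = ytil n X (mv p X x) i + alpha * x i.
Proof.
  intros Hi. unfold mv, Gm, ytil.
  rewrite (rsum_ext p _ (fun j => rsum n (fun k => X k i * X k j * x j) + alpha * (idm i j * x j)))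
    by (intros; rewrite Rmult_plus_distr_r; f_equal;
        [rewrite Rmult_comm, <- rsum_scal; apply rsum_ext; intros; ring | ring]).
  rewrite rsum_plus, rsum_scal, rsum_idm by auto. f_equal.
  rewrite rsum_swap. apply rsum_ext. intros k _. rewrite <- rsum_scal. apply rsum_ext; intros; ring.
Qed.

Lemma Gm_coercive n p X alpha x : alpha * nsq p x <= dot p x (mv p (Gm n X alpha) x).
Proof.
  unfold dot at 1.
  rewrite (rsum_ext p _ (fun i => x i * ytil n X (mv p X x) i + alpha * (x i ^ 2)))
    by (intros; rewrite Gm_mv by auto; ring).
  rewrite rsum_plus, rsum_scal. fold (dot p x (ytil n X (mv p X x))). rewrite dot_ytil.
  assert (0 <= dot n (mv p X x) (mv p X x)) by (apply rsum_nonneg; intros; nra).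
  unfold nsq. lra.
Qed.

Lemma norm2_Gm_mv_le n p X alpha x : alpha > 0 ->
  norm2 p (mv p (Gm n X alpha) x) <= (opnorm n p X ^ 2 + alpha) * norm2 p x.
Proof.
  intros Ha.
  rewrite (norm2_ext p _ (fun i => ytil n X (mv p X x) i + alpha * x i))
    by (intros; apply Gm_mv; auto).
  eapply Rle_trans; [apply norm2_add_le|].
  rewrite norm2_scal, Rabs_right by lra.
  pose proof (norm2_ytil_le n p X (mv p X x)). pose proof (norm2_mv_le n p X x).
  pose proof (norm2_nonneg p x). pose proof (norm2_nonneg n (mv p X x)).
  pose proof (opnorm_nonneg n p X).
  simpl. nra.
Qed.

(** * The generalised Jacobian [H(w)] *)

Lemma Hmat_mv_top n p X lam alpha w v i : (i < p)%nat ->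
  mv (2 * p) (Hmat n p X lam alpha w) v i =
  (1 - actv p lam w i) * v i - actv p lam w i * v (p + i)%nat.
Proof.
  intros Hi. unfold mv. replace (2 * p)%nat with (p + p)%nat by lia.
  rewrite rsum_add_range.
  rewrite (rsum_ext p _ (fun j => idm i j * ((1 - actv p lam w i) * v j))).
  2:{ intros j Hj. unfold Hmat.
      destruct (Nat.ltb_spec i p), (Nat.ltb_spec j p); [ring | lia..]. }
  rewrite (rsum_ext p (fun j => Hmat n p X lam alpha w i (p + j)%nat * v (p + j)%nat)
                       (fun j => idm i j * (- actv p lam w i * v (p + j)%nat))).
  2:{ intros j Hj. unfold Hmat. replace (p + j - p)%nat with j by lia.
      destruct (Nat.ltb_spec i p), (Nat.ltb_spec (p + j) p); [lia | ring | lia..]. }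
  rewrite !rsum_idm by auto. ring.
Qed.

Lemma Hmat_mv_bot n p X lam alpha w v i : (i < p)%nat ->
  mv (2 * p) (Hmat n p X lam alpha w) v (p + i)%nat =
  mv p (Gm n X alpha) v i + INR n * v (p + i)%nat.
Proof.
  intros Hi. unfold mv. replace (2 * p)%nat with (p + p)%nat by lia.
  rewrite rsum_add_range.
  rewrite (rsum_ext p _ (fun j => Gm n X alpha i j * v j)).
  2:{ intros j Hj. unfold Hmat. replace (p + i - p)%nat with i by lia.
      destruct (Nat.ltb_spec (p + i) p), (Nat.ltb_spec j p); [lia | lia | ring | lia]. }
  rewrite (rsum_ext p (fun j => Hmat n p X lam alpha w (p + i)%nat (p + j)%nat * v (p + j)%nat)
                       (fun j => idm i j * (INR n * v (p + j)%nat))).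
  2:{ intros j Hj. unfold Hmat. replace (p + i - p)%nat with i by lia.
      replace (p + j - p)%nat with j by lia.
      destruct (Nat.ltb_spec (p + i) p), (Nat.ltb_spec (p + j) p); [lia.. | ring]. }
  rewrite rsum_idm by auto. ring.
Qed.

(* The constant: with K = n + 1 + alpha + N^2 one gets alpha Q <= K T and
   V <= T + K (Q + R), and K <= K^2 / alpha. *)
Lemma coercive_arith (n alpha N Q R S T V Gb : R) :
  1 <= n -> 0 < alpha -> 0 <= Q -> 0 <= R ->
  R <= T -> S <= T ->
  alpha * Q <= S + (N ^ 2 + alpha + n) * R ->
  Gb <= S + (N ^ 2 + alpha) * (Q + R) ->
  V <= Q + R + Gb ->
  V <= (1 + 2 * (n + 1 + alpha + N ^ 2) ^ 2 / alpha) * T.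
Proof.
  intros Hn Ha HQ HR HRT HST HQb HGb HV.
  set (K := n + 1 + alpha + N ^ 2).
  assert (HN : 0 <= N ^ 2) by apply pow2_ge_0.
  assert (HaK : alpha <= K) by (unfold K; lra).
  assert (HQK : alpha * Q <= K * T) by (unfold K in *; nra).
  assert (HQT : Q <= K * T / alpha).
  { apply (Rmult_le_reg_l alpha); auto. replace (alpha * (K * T / alpha)) with (K * T)
      by (field; lra). exact HQK. }
  assert (HKK : K * T <= K ^ 2 / alpha * T).
  { apply Rmult_le_compat_r; [lra|].
    apply (Rmult_le_reg_l alpha); auto.
    replace (alpha * (K ^ 2 / alpha)) with (K * K) by (field; lra). nra. }
  assert (HV' : V <= T + K * (Q + R)) by (unfold K in *; nra).
  assert (HKQR : K * (Q + R) <= K * (K * T / alpha + T)) by (apply Rmult_le_compat_l; lra).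
  replace (K * (K * T / alpha + T)) with (K ^ 2 / alpha * T + K * T) in HKQR by (field; lra).
  replace ((1 + 2 * K ^ 2 / alpha) * T) with (T + 2 * (K ^ 2 / alpha * T)) by (field; lra).
  lra.
Qed.

Section ActiveSetSplit.

Variables (n p : nat) (X : mat) (alpha : R) (a beta d : vec).
Hypothesis halpha : 0 < alpha.
Hypothesis ha : forall i, a i = 0 \/ a i = 1.

Let G := Gm n X alpha.
Let N := opnorm n p X.
Let r : vec := fun i => (1 - a i) * beta i - a i * d i.
Let s : vec := fun i => mv p G beta i + INR n * d i.
Let q : vec := fun i => a i * beta i.
Let e : vec := fun i => (1 - a i) * beta i.
Let f : vec := fun i => a i * d i.
Let g : vec := fun i => (1 - a i) * d i.

Lemma nsq_residual_split : nsq p r = nsq p e + nsq p f.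
Proof.
  unfold nsq. rewrite <- rsum_plus. apply rsum_ext. intros i _.
  unfold r, e, f. destruct (ha i) as [-> | ->]; ring.
Qed.

Lemma nsq_block_split : nsq p beta + nsq p d = nsq p q + nsq p e + nsq p f + nsq p g.
Proof.
  unfold nsq. rewrite <- !rsum_plus. apply rsum_ext. intros i _.
  unfold q, e, f, g. destruct (ha i) as [-> | ->]; ring.
Qed.

Lemma norm2_e_le : norm2 p e <= norm2 p r.
Proof.
  apply sqrt_le_1_alt. fold (nsq p e) (nsq p r).
  rewrite nsq_residual_split. pose proof (nsq_nonneg p f). lra.
Qed.

Lemma norm2_f_le : norm2 p f <= norm2 p r.
Proof.
  apply sqrt_le_1_alt. fold (nsq p f) (nsq p r).
  rewrite nsq_residual_split. pose proof (nsq_nonneg p e). lra.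
Qed.

Lemma dot_active_Gm :
  dot p q (mv p G q) = dot p q s - dot p q (mv p G e) - INR n * dot p q f.
Proof.
  unfold dot. rewrite <- rsum_scal, <- !rsum_minus. apply rsum_ext. intros i _.
  assert (HG : mv p G beta i = mv p G q i + mv p G e i).
  { unfold mv. rewrite <- rsum_plus. apply rsum_ext. intros j _. unfold q, e. ring. }
  unfold s. rewrite HG. unfold q, f. destruct (ha i) as [-> | ->]; ring.
Qed.

Lemma active_beta_bound :
  alpha * norm2 p q <= norm2 p s + (N ^ 2 + alpha + INR n) * norm2 p r.
Proof.
  set (Q := norm2 p q). set (R := norm2 p r). set (S := norm2 p s).
  assert (HQ : 0 <= Q) by apply norm2_nonneg.
  assert (HR : 0 <= R) by apply norm2_nonneg.
  assert (HS : 0 <= S) by apply norm2_nonneg.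
  assert (HN : 0 <= N ^ 2) by apply pow2_ge_0.
  assert (Hn : 0 <= INR n) by apply pos_INR.
  assert (HGe : norm2 p (mv p G e) <= (N ^ 2 + alpha) * R).
  { eapply Rle_trans; [apply norm2_Gm_mv_le; lra|].
    apply Rmult_le_compat_l; [lra | apply norm2_e_le]. }
  assert (Hqs : dot p q s <= Q * S)
    by (eapply Rle_trans; [apply Rle_abs | apply cauchy_schwarz]).
  assert (HqGe : - dot p q (mv p G e) <= Q * ((N ^ 2 + alpha) * R)).
  { pose proof (Rle_abs (- dot p q (mv p G e))). rewrite Rabs_Ropp in H.
    pose proof (cauchy_schwarz p q (mv p G e)).
    assert (Q * norm2 p (mv p G e) <= Q * ((N ^ 2 + alpha) * R))
      by (apply Rmult_le_compat_l; auto).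
    fold Q in H0. lra. }
  assert (Hqf : - dot p q f <= Q * R).
  { pose proof (Rle_abs (- dot p q f)). rewrite Rabs_Ropp in H.
    pose proof (cauchy_schwarz p q f).
    assert (Q * norm2 p f <= Q * R) by (apply Rmult_le_compat_l; auto; apply norm2_f_le).
    fold Q in H0. lra. }
  assert (Hcoer : alpha * (Q * Q) <= Q * (S + (N ^ 2 + alpha + INR n) * R)).
  { unfold Q. rewrite norm2_sqr. eapply Rle_trans; [apply (Gm_coercive n p X)|]. fold G Q.
    rewrite dot_active_Gm.
    assert (INR n * - dot p q f <= INR n * (Q * R)) by (apply Rmult_le_compat_l; auto).
    nra. }
  destruct (Req_dec Q 0) as [Hz|Hz].
  - rewrite Hz. nra.
  - apply (Rmult_le_reg_l Q); [lra | nra].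
Qed.

Lemma inactive_d_bound : (0 < n)%nat ->
  norm2 p g <= norm2 p s + (N ^ 2 + alpha) * (norm2 p q + norm2 p r).
Proof.
  intros hn.
  assert (Hn1 : 1 <= INR n) by (apply (le_INR 1 n); lia).
  apply Rle_trans with (norm2 p (fun i => s i - mv p G beta i)).
  - (* on the inactive set, n d = s - G beta *)
    apply norm2_le_pointwise. intros i _. unfold g, s.
    replace (mv p G beta i + INR n * d i - mv p G beta i) with (INR n * d i) by ring.
    pose proof (pow2_ge_0 (d i)).
    destruct (ha i) as [-> | ->]; [|simpl; nra].
    assert (1 <= INR n * INR n) by nra. simpl. nra.
  - eapply Rle_trans; [apply norm2_sub_le|]. apply Rplus_le_compat_l.
    eapply Rle_trans; [apply norm2_Gm_mv_le; lra|].
    apply Rmult_le_compat_l; [pose proof (pow2_ge_0 N); lra|].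
    rewrite (norm2_ext p beta (fun i => q i + e i)) by (intros; unfold q, e; ring).
    eapply Rle_trans; [apply norm2_add_le|]. pose proof norm2_e_le. lra.
Qed.

Lemma block_coercive : (0 < n)%nat ->
  sqrt (nsq p beta + nsq p d)
    <= (1 + 2 * (INR n + 1 + alpha + N ^ 2) ^ 2 / alpha) * sqrt (nsq p r + nsq p s).
Proof.
  intros hn.
  assert (HT : forall x, x = r \/ x = s -> norm2 p x <= sqrt (nsq p r + nsq p s)).
  { intros x [-> | ->]; apply sqrt_le_1_alt;
      pose proof (nsq_nonneg p r); pose proof (nsq_nonneg p s); unfold nsq in *; lra. }
  apply (coercive_arith _ _ _ (norm2 p q) (norm2 p r) (norm2 p s) _ _ (norm2 p g)).
  - apply (le_INR 1 n); lia.
  - exact halpha.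
  - apply norm2_nonneg.
  - apply norm2_nonneg.
  - apply HT; auto.
  - apply HT; auto.
  - apply active_beta_bound.
  - apply inactive_d_bound, hn.
  - rewrite nsq_block_split. apply sqrt_le_sqr.
    + pose proof (norm2_nonneg p q). pose proof (norm2_nonneg p r).
      pose proof (norm2_nonneg p g). lra.
    + rewrite <- (norm2_sqr p q), <- (norm2_sqr p e), <- (norm2_sqr p f), <- (norm2_sqr p g).
      assert (He : norm2 p e * norm2 p e + norm2 p f * norm2 p f = norm2 p r * norm2 p r).
      { rewrite !norm2_sqr. symmetry. apply nsq_residual_split. }
      pose proof (norm2_nonneg p q). pose proof (norm2_nonneg p r).
      pose proof (norm2_nonneg p g). nra.
Qed.

End ActiveSetSplit.

Lemma actv_01 p lam w i : actv p lam w i = 0 \/ actv p lam w i = 1.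
Proof. unfold actv. destruct (Rle_dec _ _); auto. Qed.

Lemma Hmat_coercive n p X lam alpha w v : (0 < n)%nat -> 0 < alpha ->
  norm2 (2 * p) v
    <= (1 + 2 * (INR n + 1 + alpha + opnorm n p X ^ 2) ^ 2 / alpha)
       * norm2 (2 * p) (mv (2 * p) (Hmat n p X lam alpha w) v).
Proof.
  intros hn ha. unfold norm2. fold (nsq (2 * p) v).
  fold (nsq (2 * p) (mv (2 * p) (Hmat n p X lam alpha w) v)). rewrite !nsq_double.
  rewrite (nsq_ext p (mv (2 * p) (Hmat n p X lam alpha w) v)
             (fun i => (1 - actv p lam w i) * v i - actv p lam w i * v (p + i)%nat))
    by (intros; apply Hmat_mv_top; auto).
  rewrite (nsq_ext p (fun i => mv (2 * p) (Hmat n p X lam alpha w) v (p + i)%nat)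
             (fun i => mv p (Gm n X alpha) v i + INR n * v (p + i)%nat))
    by (intros; apply Hmat_mv_bot; auto).
  apply (block_coercive n p X alpha (actv p lam w)); auto using actv_01.
Qed.

(** * Local affinity of the soft threshold *)

Ltac destruct_real_tests :=
  repeat match goal with
  | |- context [Rcase_abs ?a] => destruct (Rcase_abs a)
  | |- context [Rle_dec ?a ?b] => destruct (Rle_dec a b)
  | |- context [Rlt_dec ?a ?b] => destruct (Rlt_dec a b)
  | H : context [Rcase_abs ?a] |- _ => destruct (Rcase_abs a)
  | H : context [Req_EM_T ?a ?b] |- _ => destruct (Req_EM_T a b)
  end.

Lemma soft_cases lam x : lam > 0 -> soft lam x =
  (if Rlt_dec lam x then x - lam else if Rlt_dec x (- lam) then x + lam else 0).
Proof. intros Hl. unfold soft, sgn, Rmax, Rabs. destruct_real_tests; lra. Qed.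

(* Distance from u to the kinks of soft lam, except that at a kink any radius
   below lam works. *)
Definition soft_margin (lam u : R) : R :=
  if Req_EM_T (Rabs u) lam then lam else Rabs (Rabs u - lam).

Lemma soft_margin_pos lam u : lam > 0 -> 0 < soft_margin lam u.
Proof.
  intros Hl. unfold soft_margin.
  destruct (Req_EM_T (Rabs u) lam); [lra|]. apply Rabs_pos_lt. lra.
Qed.

Lemma soft_locally_affine lam u v : lam > 0 -> Rabs (v - u) < soft_margin lam u ->
  soft lam v - soft lam u = (if Rle_dec lam (Rabs v) then 1 else 0) * (v - u).
Proof.
  intros Hl H. rewrite !soft_cases by auto. unfold soft_margin, Rabs in *.
  destruct_real_tests; lra.
Qed.

(** * Newton differentiability *)

Lemma newton_residual_zero n p X y lam alpha z h : lam > 0 ->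
  (forall i, (i < p)%nat ->
     Rabs (h i + h (p + i)%nat) < soft_margin lam (z i + z (p + i)%nat)) ->
  forall i, (i < 2 * p)%nat ->
    vsub (vsub (Fmap n p X y lam alpha (vadd z h)) (Fmap n p X y lam alpha z))
         (mv (2 * p) (Hmat n p X lam alpha (vadd z h)) h) i = 0.
Proof.
  intros Hl Hh i Hi. unfold vsub.
  destruct (Nat.lt_ge_cases i p) as [Hip|Hpi].
  - rewrite Hmat_mv_top by auto. unfold Fmap, actv, vadd.
    destruct (Nat.ltb_spec i p); [|lia].
    pose proof (soft_locally_affine lam (z i + z (p + i)%nat)
                  (z i + h i + (z (p + i)%nat + h (p + i)%nat)) Hl) as Hs.
    replace (z i + h i + (z (p + i)%nat + h (p + i)%nat) - (z i + z (p + i)%nat))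
      with (h i + h (p + i)%nat) in Hs by ring.
    specialize (Hs (Hh i Hip)).
    destruct (Rle_dec lam (Rabs (z i + h i + (z (p + i)%nat + h (p + i)%nat)))); lra.
  - replace i with (p + (i - p))%nat by lia. set (j := (i - p)%nat).
    rewrite Hmat_mv_bot by lia. unfold Fmap.
    destruct (Nat.ltb_spec (p + j) p); [lia|].
    replace (p + j - p)%nat with j by lia. rewrite mv_vadd. unfold vadd. ring.
Qed.

Lemma Fmap_newton_diff n p X y lam alpha z : lam > 0 ->
  newton_diff (2 * p) (2 * p) (Fmap n p X y lam alpha) (Hmat n p X lam alpha) z.
Proof.
  intros Hl eps Heps.
  destruct (exists_pos_lower_bound p (fun i => soft_margin lam (z i + z (p + i)%nat)))
    as [m [Hm Hle]]; [intros; apply soft_margin_pos; auto|].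
  exists (m / 2). split; [lra|]. intros h Hh.
  rewrite norm2_vec0.
  - pose proof (norm2_nonneg (2 * p) h). nra.
  - apply newton_residual_zero; auto. intros i Hi.
    eapply Rle_lt_trans; [apply Rabs_triang|].
    pose proof (abs_coord_le_norm2 (2 * p) h i ltac:(lia)).
    pose proof (abs_coord_le_norm2 (2 * p) h (p + i)%nat ltac:(lia)).
    pose proof (Hle i Hi). lra.
Qed.

(** * Inverting a coercive matrix *)

From mathcomp Require all_boot all_algebra Rstruct.

Module MxInverse.
Import all_boot all_algebra Rstruct GRing.Theory.
Local Open Scope ring_scope.

Lemma rsum_big k (f : nat -> R) : rsum k f = \sum_(i < k) f i.
Proof.
elim: k => [|k IH] /=; first by rewrite big_ord0.
by rewrite big_ord_recr /= IH.
Qed.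

Lemma injective_invertible k (A : mat) :
  (forall v : vec, (forall i, (i < k)%coq_nat -> mv k A v i = 0) ->
     forall i, (i < k)%coq_nat -> v i = 0) ->
  exists B, is_inverse k A B.
Proof.
case: k => [|k] Hinj.
  by exists A => i j Hi; exfalso; apply: (Nat.nlt_0_r i).
pose M : 'M[R]_k.+1 := \matrix_(i, j) A i j.
have HM : M \in unitmx.
  rewrite -unitmx_tr -row_free_unit -kermx_eq0.
  apply/eqP/row_matrixP => i; rewrite row0.
  set w := row i (kermx M^T).
  have Hw : w *m M^T = 0 by rewrite /w -row_mul mulmx_ker row0.
  pose v : vec := fun l : nat => w 0 (inord l).
  have Hv : forall j, (j < k.+1)%coq_nat -> mv k.+1 A v j = 0.
    move=> j /ltP Hj.
    rewrite /mv rsum_big.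
    have := congr1 (fun m : 'M[R]_(1, k.+1) => m 0 (Ordinal Hj)) Hw.
    rewrite !mxE /= => H; apply: (eq_trans _ H).
    apply: eq_bigr => l _; rewrite /v inord_val mulrC; congr (_ * _); by rewrite !mxE.
  apply/matrixP => a l; rewrite (ord1 a).
  have := Hinj v Hv l (ltP (ltn_ord l)).
  by rewrite /v inord_val => ->; rewrite mxE.
exists (fun i j => invmx M (inord i) (inord j)) => i j /ltP Hi /ltP Hj.
have Hid : idm i j = (1%:M : 'M[R]_k.+1) (inord i) (inord j).
  rewrite mxE /idm.
  case: (PeanoNat.Nat.eqb_spec i j) => [->|Hne]; first by rewrite eqxx.
  by case: eqP => // /(congr1 val); rewrite /= !inordK.
split; rewrite /mm rsum_big Hid.
- rewrite -(mulmxV HM) mxE; apply: eq_bigr => l _; by rewrite mxE inord_val inordK.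
- rewrite -(mulVmx HM) mxE; apply: eq_bigr => l _; by rewrite mxE inord_val inordK.
Qed.

End MxInverse.

Lemma coercive_inverse k (A : mat) (C : R) : 0 <= C ->
  (forall v, norm2 k v <= C * norm2 k (mv k A v)) ->
  exists B, is_inverse k A B /\ opnorm k k B <= C.
Proof.
  intros HC Hco.
  destruct (MxInverse.injective_invertible k A) as [B HB].
  { intros v Hv. apply norm2_eq0.
    pose proof (Hco v) as H. rewrite (norm2_vec0 k (mv k A v) Hv), Rmult_0_r in H.
    pose proof (norm2_nonneg k v). lra. }
  exists B. split; auto.
  apply opnorm_le. intros x Hx.
  assert (HAB : norm2 k (mv k A (mv k B x)) = norm2 k x).
  { apply norm2_ext. intros i Hi. rewrite mv_mm. unfold mv.
    rewrite (rsum_ext k _ (fun l => idm i l * x l)).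
    - apply rsum_idm; auto.
    - intros l Hl. destruct (HB i l Hi Hl) as [E _]. rewrite E. reflexivity. }
  eapply Rle_trans; [apply (Hco (mv k B x))|]. rewrite HAB.
  rewrite <- (Rmult_1_r C) at 2. apply Rmult_le_compat_l; auto.
Qed.

Theorem theorem1 (n p : nat) (X : mat) (y : vec) (lam alpha : R)
  (hn : (0 < n)%nat) (hlam : lam > 0) (halpha : alpha > 0) :
  (forall z : vec,
     newton_diff (2 * p) (2 * p) (Fmap n p X y lam alpha) (Hmat n p X lam alpha) z)
  /\
  (forall w : vec, exists Hinv : mat,
     is_inverse (2 * p) (Hmat n p X lam alpha w) Hinv /\
     opnorm (2 * p) (2 * p) Hinv
       <= 1 + 2 * (INR n + 1 + alpha + opnorm n p X ^ 2) ^ 2 / alpha).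
Proof.
  split.
  - intros z. apply Fmap_newton_diff, hlam.
  - intros w. apply coercive_inverse.
    + assert (0 <= (INR n + 1 + alpha + opnorm n p X ^ 2) ^ 2 / alpha)
        by (apply Rmult_le_pos; [apply pow2_ge_0 | left; apply Rinv_0_lt_compat; lra]).
      lra.
    + intros v. apply Hmat_coercive; auto.
Qed.
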